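(* Let $m,n\ge 2$ and let $W$ be a channel from $\{1,\dots,m\}$ to $\{1,\dots,n\}$. Let $\alpha_j=\min_{1\le i\le m}W_{i,j}$ for $1\le j\le n$. Then $\overline{P}_W(1)=\sum_{j=1}^n\alpha_j$, and \[ \underline{C}_{11}(W)\ge 1-\overline{P}_W(1). \] If $\overline{P}_W(1)=1$, then $\underline{C}_{11}(W)\le 0$. If $\overline{P}_W(1)<1$, define \[ W'=\frac{W-\sum_{j=1}^n\alpha_j\mathrm{U}_j}{1-\overline{P}_W(1)},\qquad a=\lfloor \mathbf{1}W'\rfloor\ (\text{entrywise}),\qquad \gamma=\Big(m+\mathrm{w}(a)-\sum_{j=1}^n a_j\Big)\wedge n; \] then $\underline{C}_{11}(W)\le (1-\overline{P}_W(1))\log_2\gamma$. Moreover, if $m=2$ or $n=2$, then $\underline{C}_{11}(W)=1-\overline{P}_W(1)$.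
   Context: A channel from $\mathcal{X}=\{1,\dots,m\}$ to $\mathcal{Y}=\{1,\dots,n\}$ is an $m\times n$ row-stochastic matrix $W=(W_{x,y})$. A deterministic channel is a channel whose entries are all $0$ or $1$; it is identified with the map $D:\mathcal{X}\to\mathcal{Y}$ with $D(x)=y$ iff $D_{x,y}=1$. $\mathcal{D}$ is the set of all deterministic channels, and $\mathrm{rank}(D)$ is the matrix rank (the number of nonzero columns). $\mathrm{U}_j$ denotes the deterministic channel whose $j$-th column is all ones. $\Lambda(W)=\{\lambda \text{ probability distribution on }\mathcal{D}: W=\sum_{D\in\mathcal{D}}\lambda_D D\}$. For $\lambda$ a probability distribution on $\mathcal{D}$, $C_{11}(\lambda)=\sum_D\lambda_D\log_2\mathrm{rank}(D)$, and $\underline{C}_{11}(W)=\inf\{C_{11}(\lambda):\lambda\in\Lambda(W)\}$. For $\lambda\in\Lambda(W)$, $P_\lambda(r)=\lambda(\{D\in\mathcal{D}:\mathrm{rank}(D)=r\})$ and $\overline{P}_W(r)=\max_{\lambda\in\Lambda(W)}P_\lambda(r)$. $\mathbf{1}$ is the all-one row vector of length $m$ (so $\mathbf{1}W$ is the vector of column sums). For a vector $a$, $\mathrm{w}(a)$ is the number of its nonzero entries; $x\wedge y=\min(x,y)$. *)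

From HB Require Import structures.
From mathcomp Require Import all_boot all_order all_algebra.
From mathcomp Require Import all_classical all_reals all_analysis.
Set Implicit Arguments. Unset Strict Implicit. Unset Printing Implicit Defensive.
Import Order.TTheory GRing.Theory Num.Theory.
Local Open Scope classical_set_scope.
Local Open Scope ring_scope.

Section Channels.
Variables (R : realType) (m n : nat).

Definition channel (W : 'M[R]_(m, n)) : Prop :=
  (forall i j, 0 <= W i j) /\ (forall i, \sum_j W i j = 1).

(* deterministic channels are identified with maps X -> Y *)
Definition detch := {ffun 'I_m -> 'I_n}.

Definition detmx (D : detch) : 'M[R]_(m, n) :=
  \matrix_(x, y) (D x == y)%:R.

Definition drank (D : detch) : nat := \rank (detmx D).

Definition Uch (j : 'I_n) : detch := [ffun _ => j].

Definition log2 (x : R) : R := ln x / ln 2.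

Definition distr_on (lam : {ffun detch -> R}) : Prop :=
  (forall D, 0 <= lam D) /\ \sum_D lam D = 1.

Definition Lambda (W : 'M[R]_(m, n)) : set {ffun detch -> R} :=
  [set lam | distr_on lam /\ W = \sum_D lam D *: detmx D].

Definition C11 (lam : {ffun detch -> R}) : R :=
  \sum_D lam D * log2 (drank D)%:R.

Definition C11low (W : 'M[R]_(m, n)) : R :=
  inf [set C11 lam | lam in Lambda W].

Definition Plam (lam : {ffun detch -> R}) (r : nat) : R :=
  \sum_(D | drank D == r) lam D.

(* \overline{P}_W(r) = max over Lambda(W); defined as the sup, the theorem
   additionally asserts it is attained *)
Definition Pbar (W : 'M[R]_(m, n)) (r : nat) : R :=
  sup [set Plam lam r | lam in Lambda W].

(* alpha_j = min_i W_{i,j}; the fold starts from 1, which is harmless since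
   channel entries are <= 1 (and m >= 1) *)
Definition alpha (W : 'M[R]_(m, n)) (j : 'I_n) : R := \big[Num.min/1]_i W i j.

Definition Wprime (W : 'M[R]_(m, n)) : 'M[R]_(m, n) :=
  (1 - Pbar W 1)^-1 *: (W - \sum_j alpha W j *: detmx (Uch j)).

Definition avec (W : 'M[R]_(m, n)) (j : 'I_n) : int :=
  Num.floor (\sum_i Wprime W i j).

Definition gamma (W : 'M[R]_(m, n)) : int :=
  Num.min ((m + #|[set j | avec W j != 0]|)%:Z - \sum_j avec W j) n%:Z.

End Channels.

Arguments detch : clear implicits.

From HB Require Import structures.
From mathcomp Require Import all_boot all_order all_algebra.
From mathcomp Require Import all_classical all_reals all_analysis.
From mathcomp Require Import zify ring lra.
Set Implicit Arguments. Unset Strict Implicit. Unset Printing Implicit Defensive.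
Import Order.TTheory GRing.Theory Num.Theory.
Local Open Scope ring_scope.

(* Every lam in Lambda(W) gives the constant channel U_j weight at most
   min_i W_(i,j) = alpha_j, and every other deterministic channel has rank at
   least 2; hence Pbar_W(1) <= sum_j alpha_j and C11(lam) >= 1 - P_lam(1).
   Conversely W = sum_j alpha_j U_j + (1 - sum_j alpha_j) W', where W' is
   row-stochastic with column sums at least a_j.  Such a matrix is a convex
   combination of deterministic channels D with #|D^-1(j)| >= a_j for all j:
   if it is not 0/1, its fractional entries outnumber the constraints given by
   the rows and tight columns containing them (each contains at least two), so
   there is a nonzero perturbation preserving row sums and tight column sums;
   pushing both ways to the boundary splits the matrix into two with fewer
   nonzero entries or slack columns.  Each such D hits at most
   m + w(a) - sum_j a_j outputs, so its rank is at most gamma, and gamma <= 2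
   when m = 2 or n = 2. *)

Section Generic.
Variable R : realType.

Lemma exists_nonzero_solution (I J : finType) (PI : pred I) (PJ : pred J)
    (a : I -> J -> R) : (#|PJ| < #|PI|)%N ->
  exists y : I -> R, [/\ exists i, y i != 0, forall i, ~~ PI i -> y i = 0 &
    forall j, PJ j -> \sum_i y i * a i j = 0].
Proof.
move=> hc.
pose A : 'M[R]_(#|PI|, #|PJ|) := \matrix_(k, l) a (enum_val k) (enum_val l).
have : kermx A != 0.
  apply/negP => /eqP K0; have := mxrank_ker A.
  rewrite K0 mxrank0 => /esym/eqP; rewrite subn_eq0 => h.
  by move: (leq_trans h (rank_leq_col A)); rewrite leqNgt hc.
case/matrix0Pn => k0 [l0 nz].
pose u := row k0 (kermx A).
have uA : u *m A = 0 by rewrite /u -row_mul mulmx_ker row0.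
exists (fun i => \sum_k u 0 k * (enum_val k == i)%:R); split.
- exists (enum_val l0).
  rewrite (bigD1 l0) //= eqxx mulr1 big1 ?addr0; first by rewrite /u mxE.
  by move=> k nk; rewrite (inj_eq enum_val_inj) (negbTE nk) mulr0.
- move=> i ni; apply: big1 => k _.
  case: eqP => [e|]; last by rewrite mulr0.
  by move: ni; rewrite -e => /negP []; exact: enum_valP.
- move=> j Pj; have := congr1 (fun M : 'rV[R]_#|PJ| => M 0 (enum_rank_in Pj j)) uA.
  rewrite !mxE => E; apply: (etrans _ E).
  transitivity (\sum_i \sum_k u 0 k * (enum_val k == i)%:R * a i j).
    by apply: eq_bigr => i _; rewrite mulr_suml.
  rewrite exchange_big /=; apply: eq_bigr => k _.
  rewrite (bigD1 (enum_val k)) //= eqxx mulr1 big1 ?addr0.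
    by rewrite !mxE enum_rankK_in.
  by move=> i ni; rewrite eq_sym (negbTE ni) mulr0 mul0r.
Qed.

Lemma exists_maximal_step (K : finType) (p q : K -> R) :
  (forall k, 0 <= p k) -> (forall k, q k < 0 -> 0 < p k) -> (exists k, q k < 0) ->
  exists t, [/\ 0 < t, forall k, 0 <= p k + t * q k &
     exists k, q k < 0 /\ p k + t * q k = 0].
Proof.
move=> p0 pq [k0 qk0].
case: (@arg_minP _ R K k0 (fun k => q k < 0) (fun k => p k / - q k) qk0) => ks qks hks.
have nq : 0 < - q ks by rewrite oppr_gt0.
exists (p ks / - q ks); split.
- by rewrite divr_gt0 // pq.
- move=> k; case: (ltP (q k) 0) => qk.
  + have := hks k qk; rewrite ler_pdivlMr ?oppr_gt0 //.
    by rewrite mulrN -subr_ge0 opprK addrC.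
  + by rewrite addr_ge0 // mulr_ge0 // ltW // divr_gt0 // pq.
- exists ks; split => //.
  by rewrite invrN mulrN mulNr -mulrA mulVf ?mulr1 ?subrr // lt_eqF.
Qed.

Lemma sum_int_card_frac_neq1 (I : finType) (v : I -> R) (N : int) :
  (forall i, 0 <= v i <= 1) -> \sum_i v i = N%:~R -> #|[set i | 0 < v i < 1]| != 1%N.
Proof.
move=> v01 sumN; apply/cards1P => -[i1 frac1].
have /andP [v0 v1] : 0 < v i1 < 1 by have := set11 i1; rewrite -frac1 inE.
have int_other i : i != i1 -> v i = (v i == 1)%:R.
  move=> ni; have : i \notin [set i | 0 < v i < 1] by rewrite frac1 inE.
  have /andP [vi0 vi1] := v01 i.
  rewrite inE; case: eqP => [-> //|/eqP ne1 nfrac]; apply/eqP; rewrite eq_le vi0 andbT.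
  by rewrite leNgt; apply: contra nfrac => vpos; rewrite vpos lt_neqAle ne1.
move: sumN; rewrite (bigD1 i1) //= (eq_bigr _ int_other) -natr_sum.
set k := (\sum_(i | _) _)%N => e.
have ev : v i1 = (N - k%:Z)%:~R by rewrite intrB -e addrK.
rewrite ev ltr0z in v0; rewrite ev -[1]/((1:int)%:~R) ltr_int in v1; lia.
Qed.

Lemma sum0_exists_lt0 (I : finType) (v : I -> R) (i0 : I) :
  \sum_i v i = 0 -> v i0 != 0 -> exists i, v i < 0.
Proof.
move=> s0 nz; apply/not_existsP => hn.
have hp i : 0 <= v i by rewrite leNgt; apply/negP => /(@hn i).
have := psumr_eq0P (P := xpredT) (fun i _ => hp i) s0.
by move=> /(_ i0 isT) /eqP; rewrite (negbTE nz).
Qed.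

Lemma convex_sum_le (I : finType) (mu f : I -> R) (r : R) :
  (forall i, 0 <= mu i) -> \sum_i mu i = 1 -> (forall i, mu i != 0 -> f i <= r) ->
  \sum_i mu i * f i <= r.
Proof.
move=> mu_ge0 mu_sum hf; rewrite -[r]mul1r -mu_sum mulr_suml; apply: ler_sum => i _.
by have [->|/hf fi] := eqVneq (mu i) 0; rewrite ?mul0r // ler_wpM2l.
Qed.

Lemma card_set_sum (T : finType) (A : {set T}) : #|A| = (\sum_t (t \in A : nat))%N.
Proof. by rewrite -sum1_card big_mkcond /=; apply: eq_bigr => t _; case: (t \in A). Qed.

Lemma big_pair (T : Type) (idx : T) (op : Monoid.com_law idx) (I J : finType)
    (G : I * J -> T) :
  \big[op/idx]_p G p = \big[op/idx]_i \big[op/idx]_j G (i, j).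
Proof. by rewrite pair_big /=; apply: eq_big => // -[i j]. Qed.

Lemma double_card_le_sum (T : finType) (k : T -> nat) (A : {set T}) :
  (forall t, t \in A -> 2 <= k t)%N -> (2 * #|A| <= \sum_(t in A) k t)%N.
Proof.
by move=> hk; rewrite -sum1_card big_distrr /=; apply: leq_sum => t /hk; rewrite muln1.
Qed.

Lemma sum_mul_indicator (T : finType) (a : R) (G : T -> R) (t0 : T) :
  \sum_t a * (t == t0)%:R * G t = a * G t0.
Proof.
rewrite (bigD1 t0) //= eqxx mulr1 big1 ?addr0 // => t nt.
by rewrite (negbTE nt) mulr0 mul0r.
Qed.

Lemma sum_mul_indicator1 (T : finType) (a : R) (t0 : T) : \sum_t a * (t == t0)%:R = a.
Proof.
rewrite -[RHS]mulr1 -(sum_mul_indicator a (fun=> 1) t0).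
by apply: eq_bigr => t _; rewrite mulr1.
Qed.

End Generic.

Section DeterministicRank.
Variables (R : realType) (m n : nat).
Implicit Types (D : detch m n).

Definition img D : {set 'I_n} := [set j | [exists i, D i == j]].

Definition fibre D (j : 'I_n) : {set 'I_m} := [set i | D i == j].

Lemma drank_le_card_img D : (drank R D <= #|img D|)%N.
Proof.
rewrite /drank; set A := img D.
pose P : 'M[R]_(m, #|A|) := \matrix_(i, l) (D i == enum_val l)%:R.
pose Q : 'M[R]_(#|A|, n) := \matrix_(l, j) (enum_val l == j)%:R.
have -> : detmx R D = P *m Q.
  apply/matrixP => i j; rewrite !mxE.
  have DiA : D i \in A by rewrite inE; apply/existsP; exists i.
  rewrite (bigD1 (enum_rank_in DiA (D i))) //= !mxE enum_rankK_in // eqxx mul1r.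
  rewrite big1 ?addr0 // => l /negbTE nl; rewrite !mxE.
  case: eqP => [Dl|]; last by rewrite mul0r.
  by case/negP: nl; apply/eqP/enum_val_inj; rewrite enum_rankK_in.
exact: leq_trans (mxrankM_maxl _ _) (rank_leq_col _).
Qed.

Lemma drank_gt0 D (i0 : 'I_m) : (0 < drank R D)%N.
Proof.
rewrite lt0n /drank mxrank_eq0; apply/negP => /eqP/matrixP/(_ i0 (D i0)).
by rewrite !mxE eqxx => /eqP; rewrite oner_eq0.
Qed.

(* The 2 x 2 identity is a submatrix of [detmx D]: rows i1, i2 and columns D i1, D i2. *)
Lemma drank_ge2 D i1 i2 : D i1 != D i2 -> (2 <= drank R D)%N.
Proof.
move=> neq.
pose f (a : 'I_2) := if a == ord0 then i1 else i2.
have Dfinj a b : (D (f a) == D (f b)) = (a == b).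
  case: a b => [[|[|a]] Ha] [[|[|b]] Hb] //; rewrite /f /= ?eqxx //.
  - by rewrite (negbTE neq).
  - by rewrite eq_sym (negbTE neq).
pose P : 'M[R]_(2, m) := \matrix_(a, i) (f a == i)%:R.
pose Q : 'M[R]_(n, 2) := \matrix_(j, b) (j == D (f b))%:R.
have PD : P *m detmx R D = \matrix_(a, j) (D (f a) == j)%:R.
  apply/matrixP => a j; rewrite !mxE (bigD1 (f a)) //= big1 ?addr0.
    by rewrite !mxE eqxx mul1r.
  by move=> i ni; rewrite !mxE eq_sym (negbTE ni) mul0r.
have PDQ : P *m detmx R D *m Q = 1%:M.
  rewrite PD; apply/matrixP => a b; rewrite !mxE (bigD1 (D (f a))) //= big1 ?addr0.
    by rewrite !mxE !eqxx mul1r Dfinj.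
  by move=> j nj; rewrite !mxE eq_sym (negbTE nj) mul0r.
have := mxrankM_maxl (P *m detmx R D) Q.
by rewrite PDQ mxrank1 => h; apply: leq_trans h (mxrankM_maxr _ _).
Qed.

Lemma drank_Uch (j : 'I_n) (i0 : 'I_m) : drank R (Uch m j) = 1%N.
Proof.
apply/eqP; rewrite eqn_leq drank_gt0 // andbT.
apply: leq_trans (drank_le_card_img _) _.
rewrite -(cards1 j); apply: subset_leq_card; apply/fintype.subsetP => k.
by rewrite !inE => /existsP [i]; rewrite ffunE => /eqP ->.
Qed.

Lemma drank1_Uch D (i0 : 'I_m) : drank R D = 1%N -> D = Uch m (D i0).
Proof.
move=> D1; apply/ffunP => i; rewrite ffunE; apply/eqP/negPn/negP => /drank_ge2.
by rewrite D1.
Qed.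

Lemma sum_card_fibre D : (\sum_j #|fibre D j|)%N = m.
Proof.
under eq_bigr => j _ do rewrite -sum1dep_card.
rewrite (exchange_big_dep xpredT) //= -[m in RHS]card_ord -sum1_card.
by apply: eq_bigr => i _; rewrite (big_pred1 (D i)) // => j; rewrite eq_sym.
Qed.

(* Output by output: [j \in img D] + b j <= #|fibre D j| + (b j != 0). *)
Lemma card_img_bound D (b : 'I_n -> nat) : (forall j, b j <= #|fibre D j|)%N ->
  (#|img D| + \sum_j b j <= m + #|[set j | b j != 0%N]|)%N.
Proof.
move=> hb.
have imgE j : (j \in img D) = (0 < #|fibre D j|)%N.
  by rewrite inE; apply/existsP/card_gt0P => -[i Hi]; exists i; rewrite ?inE in Hi *.
rewrite !card_set_sum -{1}(sum_card_fibre D) -!big_split /=; apply: leq_sum => j _.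
rewrite imgE inE; have := hb j; case: #|fibre D j| => [|c]; case: (b j) => //=; lia.
Qed.

End DeterministicRank.

Section Decomposition.
Variables (R : realType) (m n : nat).
Implicit Types (X Y : 'M[R]_(m, n)) (D : detch m n).

Definition csum X j := \sum_i X i j.

Lemma csum_perturb X Y t j : csum (X + t *: Y) j = csum X j + t * csum Y j.
Proof. by rewrite /csum mulr_sumr -big_split; apply: eq_bigr => i _; rewrite !mxE. Qed.

Lemma rowsum_perturb X Y t i :
  \sum_j (X + t *: Y) i j = \sum_j X i j + t * \sum_j Y i j.
Proof. by rewrite mulr_sumr -big_split; apply: eq_bigr => j _; rewrite !mxE. Qed.

Lemma csum_detmx D j : csum (detmx R D) j = #|fibre D j|%:R.
Proof.
rewrite /csum /fibre -sum1dep_card natr_sum [RHS]big_mkcond /=.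
by apply: eq_bigr => i _; rewrite mxE; case: (D i == j).
Qed.

Lemma stochastic01_detmx X : (forall i, \sum_j X i j = 1) ->
  (forall i j, X i j = 0 \/ X i j = 1) -> exists D, X = detmx R D.
Proof.
move=> hrow h01.
have X_ge0 i j : 0 <= X i j by case: (h01 i j) => ->.
have row_unit i : exists j, forall k, X i k = (j == k)%:R.
  have /existsP [j /eqP Xj] : [exists j, X i j == 1].
    apply: contraT => /existsPn none; have := hrow i.
    rewrite big1 => [/eqP|k _]; first by rewrite eq_sym oner_eq0.
    by case: (h01 i k) => // Xk; have := none k; rewrite Xk eqxx.
  exists j => k; case: (j =P k) => [<- //|/eqP jk].
  case: (h01 i k) => Xk; first by rewrite Xk.
  have := hrow i; rewrite (bigD1 j) //= (bigD1 k) 1?eq_sym //= Xj Xk.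
  have : 0 <= \sum_(l | (l != j) && (l != k)) X i l by apply: sumr_ge0.
  lra.
have [f hf] := fin_all_exists row_unit.
by exists (finfun f); apply/matrixP => i k; rewrite mxE ffunE hf.
Qed.

Lemma exists_kernel_on (F : {set 'I_m * 'I_n}) (PR : {set 'I_m}) (PC : {set 'I_n}) :
  (#|PR| + #|PC| < #|F|)%N ->
  exists Y, [/\ Y != 0, forall i j, Y i j != 0 -> (i, j) \in F,
    forall i, i \in PR -> \sum_j Y i j = 0 & forall j, j \in PC -> csum Y j = 0].
Proof.
move=> hc.
pose PJ (c : 'I_m + 'I_n) := match c with inl i => i \in PR | inr j => j \in PC end.
pose a (p : 'I_m * 'I_n) (c : 'I_m + 'I_n) : R :=
  match c with inl i => (p.1 == i)%:R | inr j => (p.2 == j)%:R end.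
have cardPJ : #|PJ| = (#|PR| + #|PC|)%N by rewrite -!sum1_card big_sumType.
rewrite -cardPJ in hc.
have [y [[p ynz] ysupp ycon]] := exists_nonzero_solution (PI := mem F) a hc.
exists (\matrix_(i, j) y (i, j)); split.
- by apply/matrix0Pn; exists p.1, p.2; rewrite mxE -surjective_pairing.
- by move=> i j; rewrite mxE; apply: contraR => /ysupp/eqP.
- move=> i Pi; apply: (etrans _ (ycon (inl i) Pi)); symmetry.
  rewrite big_pair (bigD1 i) //= [X in _ + X]big1 ?addr0.
    by apply: eq_bigr => j _; rewrite mxE eqxx mulr1.
  by move=> i' ni; apply: big1 => j _; rewrite (negbTE ni) mulr0.
- move=> j Pj; apply: (etrans _ (ycon (inr j) Pj)); symmetry.
  rewrite big_pair exchange_big (bigD1 j) //= [X in _ + X]big1 ?addr0.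
    by apply: eq_bigr => i _; rewrite mxE eqxx mulr1.
  by move=> j' nj; apply: big1 => i _; rewrite (negbTE nj) mulr0.
Qed.

Variable b : 'I_n -> nat.

Definition tight X j := csum X j == (b j)%:R.

Definition admissible X := [/\ forall i j, 0 <= X i j, forall i, \sum_j X i j = 1
   & forall j, (b j)%:R <= csum X j].

Definition decomposable X := exists mu : {ffun detch m n -> R},
  [/\ forall D, 0 <= mu D, \sum_D mu D = 1, X = \sum_D mu D *: detmx R D &
      forall D, mu D != 0 -> forall j, (b j <= #|fibre D j|)%N].

Definition defect X := (#|[set p : 'I_m * 'I_n | X p.1 p.2 != 0%R]| +
                        #|[set j | ~~ tight X j]|)%N.

Lemma admissible_le1 X i j : admissible X -> X i j <= 1.
Proof. by case=> X_ge0 X_row _; rewrite -(X_row i) (bigD1 j) //= lerDl sumr_ge0. Qed.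

Lemma decomposable_detmx D : (forall j, b j <= #|fibre D j|)%N ->
  decomposable (detmx R D).
Proof.
move=> hD; exists [ffun D' => (D' == D)%:R]; split.
- by move=> D'; rewrite ffunE ler0n.
- by rewrite (bigD1 D) //= ffunE eqxx big1 ?addr0 // => D' /negbTE nD; rewrite ffunE nD.
- rewrite (bigD1 D) //= ffunE eqxx scale1r big1 ?addr0 // => D' /negbTE nD.
  by rewrite ffunE nD scale0r.
- by move=> D'; rewrite ffunE; case: (D' =P D) => [-> _ //|]; rewrite eqxx.
Qed.

Lemma admissible01_decomposable X : admissible X ->
  (forall i j, X i j = 0 \/ X i j = 1) -> decomposable X.
Proof.
move=> [_ hrow hcol] h01; have [D XD] := stochastic01_detmx hrow h01.
rewrite XD; apply: decomposable_detmx => j.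
by have := hcol j; rewrite XD csum_detmx ler_nat.
Qed.

Lemma decomposable_convex X1 X2 c : 0 <= c <= 1 ->
  decomposable X1 -> decomposable X2 -> decomposable (c *: X1 + (1 - c) *: X2).
Proof.
move=> /andP [c0 c1] [mu1 [mu1_ge0 mu1_sum X1E mu1_fib]] [mu2 [mu2_ge0 mu2_sum X2E mu2_fib]].
have c'0 : 0 <= 1 - c by rewrite subr_ge0.
exists [ffun D => c * mu1 D + (1 - c) * mu2 D]; split.
- by move=> D; rewrite ffunE addr_ge0 // mulr_ge0.
- under eq_bigr => D _ do rewrite ffunE.
  by rewrite big_split /= -!mulr_sumr mu1_sum mu2_sum !mulr1 subrKC.
- rewrite X1E X2E !scaler_sumr -big_split /=; apply: eq_bigr => D _.
  by rewrite ffunE !scalerA -scalerDl.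
- move=> D; rewrite ffunE => nzD j.
  have [mu1D0|mu1D] := eqVneq (mu1 D) 0; last exact: mu1_fib mu1D j.
  apply: mu2_fib; apply: contra nzD => /eqP mu2D0.
  by rewrite mu1D0 mu2D0 !mulr0 addr0.
Qed.

Definition direction X Y := [/\ forall i j, Y i j != 0 -> 0 < X i j,
  forall i, \sum_j Y i j = 0 & forall j, tight X j -> csum Y j = 0].

Lemma direction_opp X Y : direction X Y -> direction X (- Y).
Proof.
move=> [hsupp hrow htight]; split.
- by move=> i j; rewrite mxE oppr_eq0; apply: hsupp.
- by move=> i; under eq_bigr => j _ do rewrite mxE; rewrite sumrN hrow oppr0.
- move=> j tj; rewrite /csum; under eq_bigr => i _ do rewrite mxE.
  by rewrite sumrN -/(csum Y j) htight ?oppr0.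
Qed.

Lemma defect_perturb_lt X Y t : direction X Y ->
  (exists i j, 0 < X i j /\ (X + t *: Y) i j = 0) \/
  (exists j, ~~ tight X j /\ tight (X + t *: Y) j) ->
  (defect (X + t *: Y) < defect X)%N.
Proof.
move=> [hsupp _ htight] hstrict.
have supp_sub : [set p : 'I_m * 'I_n | (X + t *: Y) p.1 p.2 != 0] \subset
                [set p : 'I_m * 'I_n | X p.1 p.2 != 0].
  apply/fintype.subsetP => -[i j]; rewrite !inE !mxE /=; apply: contraNN => /eqP X0.
  have Y0 : Y i j = 0 by apply/eqP; apply: contraT => /hsupp; rewrite X0 ltxx.
  by rewrite X0 Y0 mulr0 addr0.
have slack_sub : [set j | ~~ tight (X + t *: Y) j] \subset [set j | ~~ tight X j].
  apply/fintype.subsetP => j; rewrite !inE; apply: contraNN => tj.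
  by rewrite /tight csum_perturb htight // mulr0 addr0.
rewrite /defect; case: hstrict => [[i [j [Xij_gt0 Xtij]]] | [j [ntj ttj]]].
- rewrite -addSn leq_add ?subset_leq_card // proper_card //.
  by apply/properP; split => //; exists (i, j); rewrite !inE /= ?Xtij ?eqxx ?gt_eqF.
- rewrite -addnS leq_add ?subset_leq_card // proper_card //.
  by apply/properP; split => //; exists j; rewrite !inE ?ntj ?ttj.
Qed.

Lemma admissible_step X Y : admissible X -> direction X Y -> (exists i j, Y i j < 0) ->
  exists t, [/\ 0 < t, admissible (X + t *: Y) & (defect (X + t *: Y) < defect X)%N].
Proof.
move=> [h0 h1 hc] dirY [i0 [j0 neg]]; have [hsupp hrow htight] := dirY.
pose p (k : 'I_m * 'I_n + 'I_n) :=
  match k with inl ij => X ij.1 ij.2 | inr j => csum X j - (b j)%:R end.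
pose q (k : 'I_m * 'I_n + 'I_n) :=
  match k with inl ij => Y ij.1 ij.2 | inr j => csum Y j end.
have p_ge0 k : 0 <= p k by case: k => [[i j]|j] /=; rewrite ?subr_ge0.
have pq k : q k < 0 -> 0 < p k.
  case: k => [[i j]|j] /= qk; first by apply: hsupp; rewrite lt_eqF.
  rewrite subr_gt0 lt_def hc andbT; apply/negP => tj.
  by move: qk; rewrite htight // ltxx.
have [t [t_gt0 ht [k [qk pqk]]]] :=
  exists_maximal_step p_ge0 pq (ex_intro _ (inl (i0, j0)) neg).
exists t; split => //.
- split.
  + by move=> i j; rewrite !mxE; apply: (ht (inl (i, j))).
  + by move=> i; rewrite rowsum_perturb h1 hrow mulr0 addr0.
  + by move=> j; rewrite csum_perturb -subr_ge0 addrAC; apply: (ht (inr j)).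
- apply: defect_perturb_lt => //; case: k qk pqk => [[i j]|j] /= qk pqk.
  + by left; exists i, j; rewrite !mxE pqk; split => //; apply: hsupp; rewrite lt_eqF.
  + right; exists j; split; first by apply: contraTN qk => /htight ->; rewrite ltxx.
    by rewrite /tight csum_perturb -subr_eq0 addrAC pqk.
Qed.

End Decomposition.

Section Fractional.
Variables (R : realType) (m n : nat) (b : 'I_n -> nat) (X : 'M[R]_(m, n)).
Hypothesis admX : admissible b X.

Let F := [set p : 'I_m * 'I_n | 0 < X p.1 p.2 < 1].
Let row_frac i := [set j | (i, j) \in F].
Let col_frac j := [set i | (i, j) \in F].
Let frac_rows := [set i | 0 < #|row_frac i|]%N.
Let tight_frac_cols := [set j | tight b X j && (0 < #|col_frac j|)%N].
Let supported (Y : 'M[R]_(m, n)) := forall i j, Y i j != 0 -> (i, j) \in F.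

Lemma card_row_frac_ge2 i : (0 < #|row_frac i|)%N -> (2 <= #|row_frac i|)%N.
Proof.
have [X_ge0 X_row _] := admX.
have X01 j : 0 <= X i j <= 1 by rewrite X_ge0 (admissible_le1 _ _ admX).
have := sum_int_card_frac_neq1 (N := 1) X01 (X_row i).
have -> : row_frac i = [set j | 0 < X i j < 1] by apply/setP => j; rewrite !inE.
by case: #|_| => [|[|k]].
Qed.

Lemma card_col_frac_ge2 j : tight b X j -> (0 < #|col_frac j|)%N -> (2 <= #|col_frac j|)%N.
Proof.
move=> /eqP tj; have [X_ge0 _ _] := admX.
have X01 i : 0 <= X i j <= 1 by rewrite X_ge0 (admissible_le1 _ _ admX).
have := sum_int_card_frac_neq1 (N := b j) X01 tj.
have -> : col_frac j = [set i | 0 < X i j < 1] by apply/setP => i; rewrite !inE.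
by case: #|_| => [|[|k]].
Qed.

Lemma card_frac_rows : #|F| = (\sum_i #|row_frac i|)%N.
Proof.
rewrite card_set_sum big_pair /=.
by apply: eq_bigr => i _; rewrite card_set_sum; apply: eq_bigr => j _; rewrite [in RHS]inE.
Qed.

Lemma card_frac_cols : #|F| = (\sum_j #|col_frac j|)%N.
Proof.
rewrite card_set_sum big_pair exchange_big.
by apply: eq_bigr => j _; rewrite card_set_sum; apply: eq_bigr => i _; rewrite [in RHS]inE.
Qed.

Lemma double_card_frac_rows : (2 * #|frac_rows| <= #|F|)%N.
Proof.
apply: leq_trans (double_card_le_sum _) _ => [i|].
  by rewrite inE; apply: card_row_frac_ge2.
by rewrite card_frac_rows [X in (_ <= X)%N](bigID (mem frac_rows)) leq_addr.
Qed.

Lemma double_card_tight_frac_cols :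
  (2 * #|tight_frac_cols| <= \sum_(j in tight_frac_cols) #|col_frac j|)%N.
Proof.
by apply: double_card_le_sum => j; rewrite inE => /andP []; apply: card_col_frac_ge2.
Qed.

Lemma supported_rowsum0 Y : supported Y ->
  (forall i, i \in frac_rows -> \sum_j Y i j = 0) -> forall i, \sum_j Y i j = 0.
Proof.
move=> suppY hR i; have [/hR //|iR] := boolP (i \in frac_rows).
apply: big1 => j _; apply/eqP; apply: contraT => /suppY Fij.
by move: iR; rewrite inE card_gt0; case/set0Pn; exists j; rewrite inE.
Qed.

Lemma supported_csum0 Y j : supported Y -> #|col_frac j| = 0%N -> csum Y j = 0.
Proof.
move=> suppY /eqP; rewrite cards_eq0 => /eqP cj0; apply: big1 => i _.
apply/eqP; apply: contraT => /suppY Fij.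
have : i \in col_frac j by rewrite /col_frac finset.in_set.
by rewrite cj0 inE.
Qed.

Lemma supported_direction Y : supported Y ->
  (forall i, i \in frac_rows -> \sum_j Y i j = 0) ->
  (forall j, tight b X j -> (0 < #|col_frac j|)%N -> csum Y j = 0) -> direction b X Y.
Proof.
move=> suppY hR hT; split; last 1 first.
- move=> j tj; case: (posnP #|col_frac j|) => [/(supported_csum0 suppY)//|]; exact: hT.
- by move=> i j /suppY; rewrite inE => /andP [].
- exact: supported_rowsum0.
Qed.

(* The fractional entries of the slack column [j1] are not counted by the tight columns,
   so fractional rows and tight columns give fewer constraints than unknowns. *)
Lemma exists_direction_slack j1 : ~~ tight b X j1 -> (0 < #|col_frac j1|)%N ->
  exists2 Y, Y != 0 & direction b X Y.
Proof.
move=> sj1 cj1.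
have : (#|frac_rows| + #|tight_frac_cols| < #|F|)%N.
  have := double_card_frac_rows; have := double_card_tight_frac_cols.
  have : (\sum_(j in tight_frac_cols) #|col_frac j| + #|col_frac j1| <= #|F|)%N.
    rewrite card_frac_cols [X in (_ <= X)%N](bigID (mem tight_frac_cols)) leq_add //=.
    by rewrite (bigD1 j1) ?inE ?(negbTE sj1) //= leq_addr.
  lia.
move=> /(exists_kernel_on R) [Y [nzY suppY hR hC]]; exists Y => //.
by apply: supported_direction => // j tj cj; apply: hC; rewrite inE tj.
Qed.

(* All columns meeting [F] are tight: one column constraint is implied by the others,
   since the total sum of [Y] vanishes with its row sums. *)
Lemma exists_direction_tight p0 : p0 \in F ->
  (forall j, (0 < #|col_frac j|)%N -> tight b X j) -> exists2 Y, Y != 0 & direction b X Y.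
Proof.
move=> p0F allT; set j0 := p0.2.
have j0T : j0 \in tight_frac_cols.
  have cj0 : (0 < #|col_frac j0|)%N.
    by apply/card_gt0P; exists p0.1; rewrite inE -surjective_pairing.
  by rewrite inE cj0 allT.
have : (#|frac_rows| + #|tight_frac_cols :\ j0| < #|F|)%N.
  have := double_card_frac_rows; have := double_card_tight_frac_cols.
  have := cardsD1 j0 tight_frac_cols; rewrite j0T.
  have : (\sum_(j in tight_frac_cols) #|col_frac j| <= #|F|)%N.
    by rewrite card_frac_cols [X in (_ <= X)%N](bigID (mem tight_frac_cols)) leq_addr.
  lia.
move=> /(exists_kernel_on R) [Y [nzY suppY hR hC]]; exists Y => //.
have Yrow := supported_rowsum0 suppY hR.
have other j : j != j0 -> csum Y j = 0.
  move=> nj; case: (posnP #|col_frac j|) => [/(supported_csum0 suppY)//|cj].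
  by apply: hC; rewrite !inE nj allT.
apply: supported_direction => // j _ _; have [-> | /other //] := eqVneq j j0.
have : \sum_j csum Y j = 0 by rewrite /csum exchange_big big1.
by rewrite (bigD1 j0) //= big1 ?addr0 // => j' /other.
Qed.

Lemma exists_direction : ~ (forall i j, X i j = 0 \/ X i j = 1) ->
  exists2 Y, Y != 0 & direction b X Y.
Proof.
move=> not01.
have [p0 p0F] : exists p, p \in F.
  case: (set_0Vmem F) => [F0|[p pF]]; last by exists p.
  exfalso; apply: not01 => i j; have [X_ge0 _ _] := admX.
  have Xij1 := admissible_le1 i j admX; have : (i, j) \notin F by rewrite F0 inE.
  rewrite inE /= negb_and -!leNgt => /orP [h|h]; [left | right]; apply/eqP.
    by rewrite eq_le h X_ge0.
  by rewrite eq_le h Xij1.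
have [allT | /forallPn [j1]] := boolP [forall j, (0 < #|col_frac j|)%N ==> tight b X j].
  by apply: (exists_direction_tight p0F) => j cj; move/forallP/(_ j)/implyP: allT; apply.
by rewrite negb_imply => /andP [cj1 sj1]; apply: exists_direction_slack sj1 cj1.
Qed.

End Fractional.

(* Moving from [X] along [Y] and along [-Y] until a boundary is hit expresses [X] as
   a convex combination of two admissible matrices of smaller defect. *)
Lemma admissible_decomposable (R : realType) m n (b : 'I_n -> nat) (X : 'M[R]_(m, n)) :
  admissible b X -> decomposable b X.
Proof.
have [k] := ubnP (defect b X); elim: k X => // k IH X /ltnSE hk admX.
have [X01|not01] := pselect (forall i j, X i j = 0 \/ X i j = 1).
  exact: admissible01_decomposable.
have [Y /matrix0Pn [i0 [j0 Yij]] dirY] := exists_direction admX not01.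
have [_ Yrow _] := dirY.
have [j1 neg] := sum0_exists_lt0 (Yrow i0) Yij.
have [j2 pos] : exists j, (- Y) i0 j < 0.
  have Yrow' : \sum_j (- Y) i0 j = 0.
    by under eq_bigr => j _ do rewrite mxE; rewrite sumrN Yrow oppr0.
  by apply: (sum0_exists_lt0 (i0 := j0) Yrow'); rewrite mxE oppr_eq0.
have [t1 [t1_gt0 adm1 lt1]] := admissible_step admX dirY (ex_intro _ i0 (ex_intro _ j1 neg)).
have [t2 [t2_gt0 adm2 lt2]] :=
  admissible_step admX (direction_opp dirY) (ex_intro _ i0 (ex_intro _ j2 pos)).
have t12_gt0 : 0 < t1 + t2 by rewrite addr_gt0.
pose c := t2 / (t1 + t2).
have -> : X = c *: (X + t1 *: Y) + (1 - c) *: (X + t2 *: - Y).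
  apply/matrixP => i j; rewrite !mxE /c; field; exact: lt0r_neq0.
apply: decomposable_convex.
- apply/andP; split; first by rewrite divr_ge0 // ltW.
  by rewrite ler_pdivrMr // mul1r lerDr ltW.
- exact: IH (leq_trans lt1 hk) adm1.
- exact: IH (leq_trans lt2 hk) adm2.
Qed.

Section Log2.
Variable R : realType.

Lemma log2_1 : log2 (1 : R) = 0.
Proof. by rewrite /log2 ln1 mul0r. Qed.

Lemma log2_2 : log2 (2 : R) = 1.
Proof. by rewrite /log2 divff // gt_eqF // ln_gt0 // ltr1n. Qed.

Lemma ler_log2 (x y : R) : 0 < x -> x <= y -> log2 x <= log2 y.
Proof.
move=> x_gt0 xy; rewrite /log2 ler_wpM2r ?invr_ge0 ?ln_ge0 ?ler1n //.
by rewrite ler_ln ?posrE // (lt_le_trans x_gt0 xy).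
Qed.

Lemma log2_nat_ge0 (k : nat) : (0 < k)%N -> 0 <= log2 (k%:R : R).
Proof. by move=> k_gt0; have := @ler_log2 1 k%:R; rewrite log2_1 ler1n; apply. Qed.

Lemma log2_nat_ge1 (k : nat) : (2 <= k)%N -> 1 <= log2 (k%:R : R).
Proof. by move=> k_ge2; have := @ler_log2 2 k%:R; rewrite log2_2 ler_nat; apply. Qed.

End Log2.

Section Channel.
Variables (R : realType) (m n : nat) (W : 'M[R]_(m, n)) (i0 : 'I_m) (j0 : 'I_n).
Hypothesis W_ge0 : forall i j, 0 <= W i j.
Hypothesis W_row : forall i, \sum_j W i j = 1.
Implicit Types (lam mu : {ffun detch m n -> R}) (D : detch m n).

Lemma alpha_le i j : alpha W j <= W i j.
Proof. exact: bigmin_le. Qed.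

Lemma le_alpha x j : x <= 1 -> (forall i, x <= W i j) -> x <= alpha W j.
Proof. by move=> x_le1 xW; apply: le_bigmin. Qed.

Lemma alpha_ge0 j : 0 <= alpha W j.
Proof. exact: le_alpha. Qed.

Definition residual := W - \sum_j alpha W j *: detmx R (Uch m j).

Lemma residualE i j : residual i j = W i j - alpha W j.
Proof.
rewrite !mxE summxE (bigD1 j) //= big1 ?addr0 => [|k nk]; rewrite !mxE ffunE.
  by rewrite eqxx mulr1.
by rewrite (negbTE nk) mulr0.
Qed.

Lemma residual_ge0 i j : 0 <= residual i j.
Proof. by rewrite residualE subr_ge0 alpha_le. Qed.

Lemma residual_row i : \sum_j residual i j = 1 - \sum_j alpha W j.
Proof. by under eq_bigr => j _ do rewrite residualE; rewrite sumrB W_row. Qed.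

Lemma sum_alpha_le1 : \sum_j alpha W j <= 1.
Proof.
by rewrite -subr_ge0 -(residual_row i0) sumr_ge0 // => j _; apply: residual_ge0.
Qed.

Lemma Plam1E lam : Plam lam 1 = \sum_j lam (Uch m j).
Proof.
rewrite /Plam (partition_big (fun D => D i0) xpredT) //=.
apply: eq_bigr => j _; apply: big_pred1 => D /=.
apply/andP/eqP => [[/eqP D1 /eqP Dj]|->]; first by rewrite (drank1_Uch i0 D1) Dj.
by rewrite drank_Uch // ffunE eqxx.
Qed.

(* [lam] weighs [U_j] at most [W i j] in every row [i]. *)
Lemma Plam1_le_sum_alpha lam : Lambda W lam -> Plam lam 1 <= \sum_j alpha W j.
Proof.
move=> [[lam_ge0 lam_sum] WE]; rewrite Plam1E; apply: ler_sum => j _; apply: le_alpha.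
  by rewrite -lam_sum (bigD1 (Uch m j)) //= lerDl sumr_ge0.
move=> i; rewrite WE summxE (bigD1 (Uch m j)) //= !mxE ffunE eqxx mulr1 lerDl.
by apply: sumr_ge0 => D _; rewrite !mxE mulr_ge0.
Qed.

Lemma C11_ge_one_sub_Plam1 lam : Lambda W lam -> 1 - Plam lam 1 <= C11 lam.
Proof.
move=> [[lam_ge0 lam_sum] _].
rewrite /C11 /Plam -{1}lam_sum (bigID (fun D => drank R D == 1%N)) /= addrAC subrr add0r.
rewrite [X in _ <= X](bigID (fun D => drank R D == 1%N)) /=.
rewrite [X in _ <= X + _]big1 ?add0r => [|D /eqP ->]; last by rewrite log2_1 mulr0.
apply: ler_sum => D D_neq1; rewrite -{1}[lam D]mulr1 ler_wpM2l // log2_nat_ge1 //.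
by have := drank_gt0 R D i0; move: D_neq1; lia.
Qed.

Definition lift_distr mu := [ffun D =>
  (1 - \sum_j alpha W j) * mu D + \sum_j alpha W j * (D == Uch m j)%:R].

Section LiftDistr.
Variable mu : {ffun detch m n -> R}.
Hypotheses (mu_ge0 : forall D, 0 <= mu D) (mu_sum : \sum_D mu D = 1).
Hypothesis residual_mu :
  residual = (1 - \sum_j alpha W j) *: \sum_D mu D *: detmx R D.

Lemma alpha_le_lift_Uch j : alpha W j <= lift_distr mu (Uch m j).
Proof.
rewrite ffunE ler_wpDl ?mulr_ge0 ?subr_ge0 ?sum_alpha_le1 //.
rewrite (bigD1 j) //= eqxx mulr1 lerDl sumr_ge0 // => k _.
by rewrite mulr_ge0 ?alpha_ge0.
Qed.

Lemma Lambda_lift : Lambda W (lift_distr mu).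
Proof.
have c_ge0 : 0 <= 1 - \sum_j alpha W j by rewrite subr_ge0 sum_alpha_le1.
split; first split.
- move=> D; rewrite ffunE addr_ge0 ?mulr_ge0 // sumr_ge0 // => j _.
  by rewrite mulr_ge0 ?alpha_ge0.
- under eq_bigr => D _ do rewrite ffunE.
  rewrite big_split /= -mulr_sumr mu_sum mulr1 exchange_big /=.
  under [X in _ + X]eq_bigr => j _ do rewrite sum_mul_indicator1.
  by rewrite subrK.
- apply/matrixP => i j; have := congr1 (fun M : 'M[R]_(m, n) => M i j) residual_mu.
  rewrite /= residualE !mxE summxE => /(canRL (subrK _)) ->.
  rewrite summxE; under [RHS]eq_bigr => D _ do rewrite mxE ffunE mulrDl.
  rewrite big_split /= mulr_sumr; congr (_ + _).
    by apply: eq_bigr => D _; rewrite !mxE mulrA.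
  under eq_bigr => D _ do rewrite mulr_suml.
  rewrite exchange_big /=.
  under eq_bigr => k _ do rewrite sum_mul_indicator !mxE ffunE.
  by rewrite (bigD1 j) //= eqxx mulr1 big1 ?addr0 // => k /negbTE ->; rewrite mulr0.
Qed.

Lemma C11_lift :
  C11 (lift_distr mu) = (1 - \sum_j alpha W j) * \sum_D mu D * log2 (drank R D)%:R.
Proof.
rewrite /C11; under eq_bigr => D _ do rewrite ffunE mulrDl.
rewrite big_split /= mulr_sumr [X in _ + X]big1 ?addr0.
  by apply: eq_bigr => D _; rewrite [RHS]mulrA.
move=> D _; rewrite mulr_suml big1 // => j _.
by have [->|_] := eqVneq D (Uch m j); rewrite ?drank_Uch ?log2_1 ?mulr0 ?mul0r.
Qed.

End LiftDistr.

Lemma exists_residual_distr (b : 'I_n -> nat) :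
  (0 < 1 - \sum_j alpha W j ->
     forall j, (b j)%:R <= csum ((1 - \sum_j alpha W j)^-1 *: residual) j) ->
  exists mu : {ffun detch m n -> R}, [/\ forall D, 0 <= mu D, \sum_D mu D = 1,
     residual = (1 - \sum_j alpha W j) *: \sum_D mu D *: detmx R D &
     0 < 1 - \sum_j alpha W j -> forall D, mu D != 0 -> forall j, (b j <= #|fibre D j|)%N].
Proof.
set c := 1 - \sum_j alpha W j => hb.
have [c_gt0|c_le0] := ltrP 0 c.
  have admW' : admissible b (c^-1 *: residual).
    split.
    - by move=> i j; rewrite mxE mulr_ge0 ?invr_ge0 ?residual_ge0 // ltW.
    - move=> i; under eq_bigr => j _ do rewrite mxE.
      by rewrite -mulr_sumr residual_row -/c mulVf // gt_eqF.
    - exact: hb.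
  have [mu [mu_ge0 mu_sum W'E mu_fib]] := admissible_decomposable admW'.
  by exists mu; split => //; rewrite -W'E scalerA divff ?scale1r // gt_eqF.
have c0 : c = 0 by apply/eqP; rewrite eq_le c_le0 subr_ge0 sum_alpha_le1.
have residual0 : residual = 0.
  apply/matrixP => i j; rewrite [RHS]mxE; apply/eqP.
  have := residual_row i; rewrite -/c c0 => /eqP.
  rewrite psumr_eq0 => [/allP /(_ j (mem_index_enum _)) //|k _].
  exact: residual_ge0.
exists [ffun D => (D == Uch m j0)%:R]; split.
- by move=> D; rewrite ffunE ler0n.
- rewrite -[RHS](sum_mul_indicator1 1 (Uch m j0)).
  by apply: eq_bigr => D _; rewrite ffunE mul1r.
- by rewrite residual0 c0 scale0r.
- by [].
Qed.

Lemma exists_Lambda_Plam1 : exists2 lam, Lambda W lam & Plam lam 1 = \sum_j alpha W j.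
Proof.
have [|mu [mu_ge0 mu_sum muE _]] := exists_residual_distr (b := fun=> 0%N).
  move=> c_gt0 j; apply: sumr_ge0 => i _.
  by rewrite mxE mulr_ge0 ?residual_ge0 // invr_ge0 ltW.
have L := Lambda_lift mu_ge0 mu_sum muE; exists (lift_distr mu) => //.
apply/eqP; rewrite eq_le Plam1_le_sum_alpha //= Plam1E.
by apply: ler_sum => j _; apply: alpha_le_lift_Uch.
Qed.

Lemma Pbar1E : Pbar W 1 = \sum_j alpha W j.
Proof.
have [lam0 L0 P0] := exists_Lambda_Plam1.
apply/eqP; rewrite eq_le; apply/andP; split.
- apply: ge_sup; first by exists (Plam lam0 1), lam0.
  by move=> x [lam hl <-]; apply: Plam1_le_sum_alpha.
- rewrite -P0; apply: sup_upper_bound; last by exists lam0.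
  split; first by exists (Plam lam0 1), lam0.
  by exists (\sum_j alpha W j) => x [lam hl <-]; apply: Plam1_le_sum_alpha.
Qed.

Lemma C11low_le lam : Lambda W lam -> C11low W <= C11 lam.
Proof.
move=> hl; apply: ge_inf; last by exists lam.
exists 0 => x [lam' [[lam'_ge0 _] _] <-]; apply: sumr_ge0 => D _.
by rewrite mulr_ge0 // log2_nat_ge0 // (drank_gt0 R D i0).
Qed.

Lemma C11low_ge : 1 - Pbar W 1 <= C11low W.
Proof.
have [lam0 L0 _] := exists_Lambda_Plam1.
apply: lb_le_inf; first by exists (C11 lam0), lam0.
move=> x [lam hl <-]; rewrite Pbar1E.
by apply: le_trans (C11_ge_one_sub_Plam1 hl); rewrite lerB // Plam1_le_sum_alpha.
Qed.

Lemma C11low_le0 : Pbar W 1 = 1 -> C11low W <= 0.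
Proof.
rewrite Pbar1E => A1.
have [|mu [mu_ge0 mu_sum muE _]] := exists_residual_distr (b := fun=> 0%N).
  by rewrite A1 subrr ltxx.
apply: le_trans (C11low_le (Lambda_lift mu_ge0 mu_sum muE)) _.
by rewrite C11_lift A1 subrr mul0r.
Qed.

Lemma avec_ge0 j : 0 <= avec W j.
Proof.
rewrite /avec floor_ge0 /Wprime Pbar1E; apply: sumr_ge0 => i _.
by rewrite mxE mulr_ge0 ?residual_ge0 // invr_ge0 subr_ge0 sum_alpha_le1.
Qed.

Lemma card_avec_neq0 :
  #|[set j | avec W j != 0]%classic| = #|[set j | `|avec W j|%N != 0%N]|.
Proof.
apply: eq_card => j; rewrite [in RHS]inE absz_eq0.
by apply/idP/idP; rewrite in_setE.
Qed.

Lemma sum_avec : \sum_j avec W j = (\sum_j `|avec W j|%N)%:Z.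
Proof.
rewrite (big_morph Posz PoszD (erefl _)); apply: eq_bigr => j _.
by rewrite abszE ger0_norm // avec_ge0.
Qed.

Lemma drank_le_gamma D : (forall j, `|avec W j|%N <= #|fibre D j|)%N ->
  (drank R D)%:Z <= gamma W.
Proof.
move=> hD; rewrite /gamma le_min lez_nat rank_leq_col andbT card_avec_neq0 sum_avec.
have := card_img_bound hD; have := drank_le_card_img R D; lia.
Qed.

Lemma C11low_le_log2 (g : int) : Pbar W 1 < 1 -> gamma W <= g ->
  C11low W <= (1 - Pbar W 1) * log2 g%:~R.
Proof.
rewrite Pbar1E -subr_gt0 => c_gt0 gamma_le_g.
have [|mu [mu_ge0 mu_sum muE mu_fib]] := exists_residual_distr (b := fun j => `|avec W j|%N).
  move=> _ j; have -> : (1 - \sum_j alpha W j)^-1 *: residual = Wprime W.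
    by rewrite /Wprime Pbar1E.
  have -> : ((`|avec W j|%N)%:R : R) = (avec W j)%:~R.
    by rewrite -[in RHS](gez0_abs (avec_ge0 j)).
  exact: floor_le.
apply: le_trans (C11low_le (Lambda_lift mu_ge0 mu_sum muE)) _.
rewrite C11_lift ler_wpM2l ?(ltW c_gt0) //.
apply: convex_sum_le => // D /(mu_fib c_gt0) /drank_le_gamma rank_le.
apply: ler_log2; first by rewrite ltr0n (drank_gt0 R D i0).
by rewrite -[X in X <= _]/(((drank R D)%:Z)%:~R) ler_int (le_trans rank_le).
Qed.

Lemma gamma_le2 : m = 2%N \/ n = 2%N -> gamma W <= 2.
Proof.
rewrite /gamma ge_min; case=> [m2|n2]; last by apply/orP; right; rewrite lez_nat n2.
have : (#|[set j | `|avec W j|%N != 0%N]| <= \sum_j `|avec W j|)%N.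
  by rewrite card_set_sum; apply: leq_sum => j _; rewrite inE; case: `|_|%N.
rewrite card_avec_neq0 sum_avec; lia.
Qed.

End Channel.

Unset Implicit Arguments.

Theorem theorem1 (R : realType) (m n : nat) (W : 'M[R]_(m, n)) :
  (2 <= m)%N -> (2 <= n)%N -> channel W ->
  [/\ (exists2 lam, Lambda W lam & Plam lam 1 = Pbar W 1)
        /\ Pbar W 1 = \sum_j alpha W j,
      1 - Pbar W 1 <= C11low W,
      Pbar W 1 = 1 -> C11low W <= 0,
      Pbar W 1 < 1 -> C11low W <= (1 - Pbar W 1) * log2 (gamma W)%:~R
    & (m = 2%N \/ n = 2%N) -> C11low W = 1 - Pbar W 1].
Proof.
move=> m_ge2 n_ge2 [W_ge0 W_row].
have i0 : 'I_m := Ordinal (ltnW m_ge2).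
have j0 : 'I_n := Ordinal (ltnW n_ge2).
have PbarE : Pbar W 1 = \sum_j alpha W j by apply: Pbar1E.
have C11low_ge : 1 - Pbar W 1 <= C11low W by apply: C11low_ge.
have C11low_le0 : Pbar W 1 = 1 -> C11low W <= 0 by apply: C11low_le0.
split => //.
- split => //; have [lam L P] := exists_Lambda_Plam1 i0 j0 W_ge0 W_row.
  by exists lam; rewrite // PbarE.
- by move=> P_lt1; apply: C11low_le_log2.
- move=> m2_or_n2; apply/eqP; rewrite eq_le C11low_ge andbT.
  have [P1|P_neq1] := eqVneq (Pbar W 1) 1; first by rewrite P1 subrr C11low_le0.
  have P_lt1 : Pbar W 1 < 1 by rewrite lt_neqAle P_neq1 PbarE; apply: sum_alpha_le1.
  rewrite -[X in _ <= X]mulr1 -[X in _ * X](log2_2 R) -[X in log2 X]/((2 : int)%:~R).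
  by apply: C11low_le_log2 => //; apply: gamma_le2.
Qed.
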